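(* Let $\epsilon\in\{1,-1\}\subseteq\mathbb{F}_{p^m}$, $\phi(x)=x^2+\epsilon\gamma x+\frac{\gamma^2}{2}$, $\mathsf{R}_{\epsilon\gamma}=R[x]/\langle\phi(x)^{p^s}\rangle$, and let $\mathcal{I}$ be an ideal of $\mathsf{R}_{\epsilon\gamma}$ (notation and parameter ranges as in the classification into Types I–IV below). Then: (a) if $\mathcal{I}=\{0\}$, $|\mathcal{I}|=1$; (b) if $\mathcal{I}=\mathsf{R}_{\epsilon\gamma}$, $|\mathcal{I}|=p^{4mp^s}$; (c) if $\mathcal{I}=\langle u\phi(x)^i\rangle$ with $0\le i\le p^s-1$, $|\mathcal{I}|=p^{2m(p^s-i)}$; (d) if $\mathcal{I}=\langle\phi(x)^i+u\phi(x)^th(x)\rangle$ is of Type III, then $|\mathcal{I}|=p^{4m(p^s-i)}$ if either $h(x)=0$, or $h(x)$ is a unit and $1\le i\le\frac{p^s+t}{2}$; and $|\mathcal{I}|=p^{2m(p^s-t)}$ if $h(x)$ is a unit and $\frac{p^s+t}{2}<i\le p^s-1$; (e) if $\mathcal{I}=\langle\phi(x)^i+u\phi(x)^th(x),\ u\phi(x)^w\rangle$ is of Type IV, $|\mathcal{I}|=p^{2m(2p^s-i-w)}$.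
   Context: Let $p$ be an odd prime and $m,s$ positive integers with $p^m\equiv 3\pmod 4$; $\mathbb{F}_{p^m}$ is the field with $p^m$ elements and $R=\mathbb{F}_{p^m}[u]/\langle u^2\rangle$. Fix $\alpha\in\mathbb{F}_{p^m}\setminus\{0\}$ non-square, $\alpha_0^{p^s}=\alpha$, $\gamma\in\mathbb{F}_{p^m}$ with $\gamma^4+4\alpha_0=0$. Ideal types of $\mathsf{R}_{\epsilon\gamma}$: Type III ideals are $\langle\phi^i+u\phi^th\rangle$ with $1\le i\le p^s-1$, $0\le t<i$, and $h=0$ or $h$ a unit of the form $\sum_{j=0}^{i-t-1}(a_{j0}x+b_{j0})\phi^j$ ($a_{j0},b_{j0}\in\mathbb{F}_{p^m}$, $a_{00}x+b_{00}\ne0$). Type IV ideals are $\langle\phi^i+u\phi^th,\ u\phi^w\rangle$ with $1\le i\le p^s-1$, $0\le t<w$, $h=0$ or $h$ a unit of the form $\sum_{j=0}^{w-t-1}(a_{j0}x+b_{j0})\phi^j$ with $a_{00}x+b_{00}\neq 0$, and $w<U$ where $U$ is the least integer with $u\phi^U\in\langle\phi^i+u\phi^th\rangle$. *)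

From HB Require Import structures.
From mathcomp Require Import all_boot all_order all_algebra.
Set Implicit Arguments. Unset Strict Implicit. Unset Printing Implicit Defensive.
Import GRing.Theory.
Local Open Scope ring_scope.

(* R = F[u]/<u^2>, realised as the quotient ring {poly %/ 'X^2} with u = 'qX *)
Definition Ru (F : finFieldType) := {poly %/ ('X^2 : {poly F})}.
HB.instance Definition _ (F : finFieldType) := Finite.on (Ru F).
HB.instance Definition _ (F : finFieldType) := GRing.ComNzRing.on (Ru F).
Definition uR (F : finFieldType) : Ru F := 'qX.
Definition cR (F : finFieldType) (c : F) : Ru F := in_qpoly ('X^2 : {poly F}) c%:P.
Definition liftp (F : finFieldType) (q : {poly F}) : {poly Ru F} := map_poly (@cR F) q.

Definition phi (F : finFieldType) (eps gam : F) : {poly F} :=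
  'X^2 + (eps * gam)%:P * 'X + (gam ^+ 2 / 2%:R)%:P.

Definition RE (F : finFieldType) (eps gam : F) (N : nat) :=
  {poly %/ (liftp (phi eps gam ^+ N))}.
HB.instance Definition _ (F : finFieldType) (eps gam : F) (N : nat) :=
  Finite.on (RE eps gam N).
HB.instance Definition _ (F : finFieldType) (eps gam : F) (N : nat) :=
  GRing.ComNzRing.on (RE eps gam N).
Definition toRE (F : finFieldType) (eps gam : F) (N : nat) (q : {poly Ru F}) :
  RE eps gam N := in_qpoly (liftp (phi eps gam ^+ N)) q.

Definition phiE (F : finFieldType) (eps gam : F) (N : nat) : RE eps gam N :=
  toRE eps gam N (liftp (phi eps gam)).
Definition uE (F : finFieldType) (eps gam : F) (N : nat) : RE eps gam N :=
  toRE eps gam N (uR F)%:P.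
Definition polE (F : finFieldType) (eps gam : F) (N : nat) (h : {poly F}) : RE eps gam N :=
  toRE eps gam N (liftp h).

Definition gen1 (T : finComNzRingType) (g : T) : {set T} := [set r * g | r : T].
Definition gen2 (T : finComNzRingType) (g1 g2 : T) : {set T} :=
  [set r1 * g1 + r2 * g2 | r1 : T, r2 : T].

Definition isunit (T : comNzRingType) (x : T) : Prop := exists v : T, v * x = 1.

Definition hform (F : finFieldType) (eps gam : F) (N k : nat) (h : {poly F}) : Prop :=
  h = 0 \/
  ((exists a b : nat -> F, (a 0%N != 0 \/ b 0%N != 0) /\
      h = \sum_(j < k) (a j *: 'X + (b j)%:P) * phi eps gam ^+ j)
   /\ isunit (polE eps gam N h)).

Definition gIII (F : finFieldType) (eps gam : F) (N i t : nat) (h : {poly F}) : RE eps gam N :=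
  phiE eps gam N ^+ i + uE eps gam N * phiE eps gam N ^+ t * polE eps gam N h.

From HB Require Import structures.
From mathcomp Require Import all_boot all_order all_algebra.
From mathcomp Require Import ring zify.
Import GRing.Theory.
Import Pdiv.CommonRing Pdiv.RingMonic.
Set Implicit Arguments. Unset Strict Implicit.
Local Open Scope ring_scope.

(** Every element of [R_{eps gam} = R[x]/<phi^N>] is [a + u b] with [a], [b]
    polynomials over [F], and [u (a + u b) = u a] vanishes exactly when
    [phi^N] divides [a]; hence [<u phi^j>] has [|F|^(2(N-j))] elements.
    Multiplication by [u] splits an ideal as [|I| = |u I| * |I :&: Ann(u)|].
    For [I] of Type III or IV, [u I = <u phi^i>] and [I :&: Ann(u) = <u phi^k>],
    with [k = w] for Type IV and, for Type III, [k = N - i + t] when [h] is a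
    unit and [N + t < 2i] (since [phi^(N-i) (phi^i + u phi^t h) = u phi^(N-i+t) h])
    and [k = i] otherwise. *)

Section FiniteRingCounting.
Variable T : finComNzRingType.

Lemma card_mulr_split (c : T) (I : {set T}) :
  (forall x y, x \in I -> y \in I -> x - y \in I) ->
  #|I| = muln #|[set c * x | x in I]| #|I :&: [set x | c * x == 0]|.
Proof.
move=> subI; rewrite -sum1_card (partition_big_imset (fun x : T => c * x)) /=.
rewrite -sum_nat_const; apply: eq_bigr => _ /imsetP [x0 Ix0 ->].
rewrite sum1_card -(card_imset (I :&: [set x | c * x == 0]) (addIr x0)).
apply: eq_card => z.
rewrite unfold_in; apply/andP/imsetP => [[Iz /eqP cz]|[y]].
  exists (z - x0); last by rewrite subrK.
  by rewrite !inE subI // mulrBr cz subrr eqxx.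
rewrite !inE => /andP [Iy /eqP cy] ->; split; last by rewrite mulrDr cy add0r.
have I0 : 0 \in I by rewrite -(subrr x0) subI.
by rewrite -[x0]opprK subI // -sub0r subI.
Qed.

Lemma gen1P (g x : T) : reflect (exists r, x = r * g) (x \in gen1 g).
Proof. by apply: (iffP imsetP) => [[r _ ->]|[r ->]]; exists r. Qed.

Lemma gen2P (g1 g2 x : T) :
  reflect (exists r1 r2, x = r1 * g1 + r2 * g2) (x \in gen2 g1 g2).
Proof.
apply: (iffP imset2P) => [[r1 r2 _ _ ->]|[r1 [r2 ->]]]; first by exists r1, r2.
by exists r1 r2.
Qed.

Lemma gen1_subr (g x y : T) : x \in gen1 g -> y \in gen1 g -> x - y \in gen1 g.
Proof. by move=> /gen1P [r ->] /gen1P [s ->]; apply/gen1P; exists (r - s); rewrite mulrBl. Qed.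

Lemma gen2_subr (g1 g2 x y : T) :
  x \in gen2 g1 g2 -> y \in gen2 g1 g2 -> x - y \in gen2 g1 g2.
Proof.
move=> /gen2P [r1 [r2 ->]] /gen2P [s1 [s2 ->]]; apply/gen2P.
by exists (r1 - s1), (r2 - s2); rewrite !mulrBl; ring.
Qed.

Lemma mulr_gen1 (c g : T) : [set c * x | x in gen1 g] = gen1 (c * g).
Proof.
apply/setP => x; apply/imsetP/gen1P => [[_ /gen1P [r ->] ->]|[r ->]].
  by exists r; rewrite mulrCA.
by exists (r * g); [apply/gen1P; exists r | rewrite mulrCA].
Qed.

Lemma mulr_gen2 (c g e : T) : c * e = 0 -> [set c * x | x in gen2 g e] = gen1 (c * g).
Proof.
move=> ce0; apply/setP => x; apply/imsetP/gen1P => [[_ /gen2P [r1 [r2 ->]] ->]|[r ->]].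
  by exists r1; rewrite mulrDr mulrCA [c * (r2 * e)]mulrCA ce0 mulr0 addr0.
by exists (r * g + 0 * e); [apply/gen2P; exists r, 0 | rewrite mul0r addr0 mulrCA].
Qed.

Section Annihilator.
Variables (c g e : T).
Hypothesis ce0 : c * e = 0.
Hypothesis ann_gen : forall r, c * (r * g) = 0 -> r * g \in gen1 e.

Lemma gen1_in_ann (x : T) : x \in gen1 e -> c * x = 0.
Proof. by move=> /gen1P [r ->]; rewrite mulrCA ce0 mulr0. Qed.

Lemma gen1_setI_ann : e \in gen1 g -> gen1 g :&: [set x | c * x == 0] = gen1 e.
Proof.
move=> /gen1P [s es]; apply/setP => x; rewrite !inE.
apply/andP/idP => [[/gen1P [r ->] /eqP]|ex]; first exact: ann_gen.
split; last by rewrite gen1_in_ann.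
by move: ex => /gen1P [r ->]; apply/gen1P; exists (r * s); rewrite es mulrA.
Qed.

Lemma gen2_setI_ann : gen2 g e :&: [set x | c * x == 0] = gen1 e.
Proof.
apply/setP => x; rewrite !inE.
apply/andP/idP => [[/gen2P [r1 [r2 ->]] /eqP]|ex].
  rewrite mulrDr [c * (r2 * e)]mulrCA ce0 mulr0 addr0 => /ann_gen.
  by move=> /gen1P [s ->]; apply/gen1P; exists (s + r2); rewrite mulrDl.
split; last by rewrite gen1_in_ann.
by move: ex => /gen1P [r ->]; apply/gen2P; exists 0, r; rewrite mul0r add0r.
Qed.

End Annihilator.

End FiniteRingCounting.

Section SquareZeroNilpotent.
Variables (R : comNzRingType) (u ph : R) (n : nat).
Hypotheses (u_sqr : u * u = 0) (phX_n : ph ^+ n = 0).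

Lemma phX_mul_eq0 a b : (n <= a + b)%N -> ph ^+ a * ph ^+ b = 0.
Proof. by move=> ab; rewrite -exprD -(subnK ab) exprD phX_n mulr0. Qed.

Lemma mulr_u_phX_factor k m x : (k <= m)%N ->
  u * ph ^+ m * x = ph ^+ (m - k) * x * (u * ph ^+ k).
Proof. by move=> km; rewrite -{1}(subnKC km) exprD; ring. Qed.

Lemma mul_u_phX_mod q c d j m : (n <= m + j)%N ->
  (q * ph ^+ m + c + u * d) * (u * ph ^+ j) = u * ph ^+ j * c.
Proof.
move=> mj; transitivity (q * (ph ^+ m * ph ^+ j) * u + u * ph ^+ j * c
  + (u * u) * (d * ph ^+ j)); first by ring.
by rewrite phX_mul_eq0 // u_sqr !(mulr0, mul0r, addr0, add0r).
Qed.

Section Generator.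
Variables (i t : nat) (H : R).
Hypothesis i_le_n : (i <= n)%N.
Local Notation g := (ph ^+ i + u * ph ^+ t * H).

Lemma mulr_u_gen : u * g = u * ph ^+ i.
Proof. by rewrite mulrDr -!mulrA mulrA u_sqr mul0r addr0. Qed.

Lemma mulr_u_mul_gen a b : u * ((a + u * b) * g) = u * (a * ph ^+ i).
Proof.
transitivity (u * (a * ph ^+ i) + (u * u) * (b * g + a * ph ^+ t * H)); first by ring.
by rewrite u_sqr mul0r addr0.
Qed.

Lemma mul_phX_gen a b : (a * ph ^+ (n - i) + u * b) * g =
  u * ph ^+ (n - i + t) * (a * H) + u * ph ^+ i * b.
Proof.
transitivity (a * (ph ^+ (n - i) * ph ^+ i) + (u * u) * (b * ph ^+ t * H)
  + u * ph ^+ (n - i + t) * (a * H) + u * ph ^+ i * b); first by rewrite exprD; ring.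
by rewrite phX_mul_eq0 ?subnK // u_sqr !(mulr0, mul0r, add0r).
Qed.

Lemma mul_phX_gen_unit v : v * H = 1 -> v * ph ^+ (n - i) * g = u * ph ^+ (n - i + t).
Proof.
by move=> vH; have := mul_phX_gen v 0; rewrite !mulr0 !addr0 vH mulr1.
Qed.

End Generator.
End SquareZeroNilpotent.

Lemma mk_monic_Xn2 (F : finFieldType) : mk_monic ('X^2 : {poly F}) = 'X^2.
Proof. by rewrite /mk_monic size_polyXn monicXn. Qed.

Lemma cR_is_zmod (F : finFieldType) : zmod_morphism (@cR F).
Proof. by move=> a b; rewrite /cR polyCB raddfB. Qed.
Lemma cR_is_monoid (F : finFieldType) : monoid_morphism (@cR F).
Proof. by split; rewrite /cR ?rmorph1 // => a b; rewrite polyCM rmorphM. Qed.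
HB.instance Definition _ (F : finFieldType) :=
  GRing.isZmodMorphism.Build _ _ (@cR F) (@cR_is_zmod F).
HB.instance Definition _ (F : finFieldType) :=
  GRing.isMonoidMorphism.Build _ _ (@cR F) (@cR_is_monoid F).

Section DualNumbers.
Variable F : finFieldType.
Local Notation u := (uR F).

Lemma uR_sqr : u * u = 0.
Proof.
rewrite /uR -rmorphM -expr2; apply: val_inj.
by rewrite /= mk_monic_Xn2 rmodpp ?monicXn.
Qed.

Lemma polyn_dual (a b : F) : polyn (cR a + u * cR b) = a%:P + b *: 'X.
Proof.
rewrite /uR /cR -!rmorphM -rmorphD mulrC mul_polyC in_qpoly_small //.
rewrite mk_monic_Xn2 size_polyXn; apply: leq_ltn_trans (size_polyD _ _) _.
rewrite gtn_max size_polyC (leq_ltn_trans (size_scale_leq _ _)) ?size_polyX //.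
by case: (_ != 0).
Qed.

Lemma dual_decomp (c : Ru F) : c = cR (polyn c)`_0 + u * cR (polyn c)`_1.
Proof.
apply: val_inj; change (polyn c = polyn (cR (polyn c)`_0 + u * cR (polyn c)`_1)).
rewrite polyn_dual.
have sc : (size (polyn c) <= 2)%N.
  by rewrite -ltnS; apply: leq_trans (size_mk_monic c) _; rewrite mk_monic_Xn2 size_polyXn.
apply/polyP => -[|[|k]]; rewrite coefD coefZ coefC coefX /= ?mulr0 ?mulr1 ?addr0 ?add0r //.
by rewrite nth_default // (leq_trans sc).
Qed.

Lemma dual_inj (a b a' b' : F) :
  cR a + u * cR b = cR a' + u * cR b' -> a = a' /\ b = b'.
Proof.
move=> /(congr1 (@polyn _ _)); rewrite !polyn_dual => e.
by split; [move: (congr1 (coefp 0) e) | move: (congr1 (coefp 1) e)];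
  rewrite /= !coefD !coefZ !coefC !coefX /= ?mulr0 ?mulr1 ?addr0 ?add0r.
Qed.

Lemma liftp_dual_decomp (q : {poly Ru F}) :
  exists a b, q = liftp a + u%:P * liftp b.
Proof.
exists (map_poly (fun c : Ru F => (polyn c)`_0) q).
exists (map_poly (fun c : Ru F => (polyn c)`_1) q).
apply/polyP => k; rewrite coefD coefCM /liftp !coef_map !coef_map_id0 ?coef0 //.
exact: dual_decomp.
Qed.

Lemma liftp_dual_inj (a b a' b' : {poly F}) :
  liftp a + u%:P * liftp b = liftp a' + u%:P * liftp b' -> a = a' /\ b = b'.
Proof.
move=> e; suff ab k : a`_k = a'`_k /\ b`_k = b'`_k.
  by split; apply/polyP => k; case: (ab k).
by apply: dual_inj; move: (congr1 (coefp k) e); rewrite /= !coefD !coefCM /liftp !coef_map.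
Qed.

End DualNumbers.

Section Phi.
Variables (F : finFieldType) (eps gam : F).
Local Notation phi := (phi eps gam).

Lemma size_phi_linear_part :
  (size ((eps * gam)%:P * 'X + (gam ^+ 2 / 2%:R)%:P)%R < 3)%N.
Proof.
rewrite size_MXaddC size_polyC.
by case: ifP => //; case: (_ != 0).
Qed.

Lemma phi_monic : phi \is monic.
Proof.
rewrite /phi -addrA monicE lead_coefDl ?lead_coefXn // size_polyXn.
exact: size_phi_linear_part.
Qed.

Lemma size_phi : size phi = 3%N.
Proof.
rewrite /phi -addrA size_polyDl ?size_polyXn //.
exact: size_phi_linear_part.
Qed.

Lemma phiX_monic n : phi ^+ n \is monic.
Proof. exact/monic_exp/phi_monic. Qed.

Lemma phiX_neq0 n : phi ^+ n != 0.
Proof. exact/monic_neq0/phiX_monic. Qed.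

Lemma size_phiX n : size (phi ^+ n) = (2 * n).+1.
Proof.
move: (size_exp phi n) (phiX_neq0 n); rewrite size_phi -size_poly_gt0.
by case: (size _) => //= n' -> .
Qed.

Lemma liftp_phiX_monic n : liftp (phi ^+ n) \is monic.
Proof. exact/monic_map/phiX_monic. Qed.

Lemma size_liftp_phiX n : size (liftp (phi ^+ n)) = (2 * n).+1.
Proof. by rewrite /liftp size_map_poly_id0 ?size_phiX // (eqP (phiX_monic n)) rmorph1 oner_neq0. Qed.

Lemma mk_monic_liftp_phiX n : (0 < n)%N -> mk_monic (liftp (phi ^+ n)) = liftp (phi ^+ n).
Proof. by move=> n_gt0; rewrite /mk_monic size_liftp_phiX liftp_phiX_monic ltnS muln_gt0 n_gt0. Qed.

End Phi.

Section QuotientRing.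
Variables (F : finFieldType) (eps gam : F) (N : nat).
Hypothesis N_gt0 : (0 < N)%N.
Local Notation phi := (phi eps gam).
Local Notation u := (uE eps gam N).
Local Notation ph := (phiE eps gam N).
Local Notation P := (polE eps gam N).

Lemma polED a b : P (a + b) = P a + P b.
Proof. by rewrite /polE /toRE /liftp !rmorphD. Qed.

Lemma polEB a b : P (a - b) = P a - P b.
Proof. by rewrite /polE /toRE /liftp !rmorphB. Qed.

Lemma polEM a b : P (a * b) = P a * P b.
Proof. by rewrite /polE /toRE /liftp !rmorphM. Qed.

Lemma polEX a n : P (a ^+ n) = P a ^+ n.
Proof.
elim: n => [|n IHn]; last by rewrite !exprS polEM IHn.
by rewrite !expr0 /polE /toRE /liftp !rmorph1.
Qed.

Lemma polE0 : P 0 = 0.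
Proof. by rewrite /polE /toRE /liftp !rmorph0. Qed.

Lemma uE_sqr : u * u = 0.
Proof. by rewrite /uE /toRE -rmorphM -polyCM uR_sqr rmorph0. Qed.

Lemma polE_phiN : P (phi ^+ N) = 0.
Proof. by apply: val_inj; rewrite /= mk_monic_liftp_phiX // rmodpp // liftp_phiX_monic. Qed.

Lemma phiE_expN : ph ^+ N = 0.
Proof. by rewrite -[ph]/(P phi) -polEX polE_phiN. Qed.

Lemma RE_decomp (r : RE eps gam N) : exists a b, r = P a + u * P b.
Proof.
have [a [b ab]] := liftp_dual_decomp (polyn r); exists a, b.
have -> : r = toRE eps gam N (polyn r).
  by apply: val_inj; symmetry; exact: in_qpoly_small (size_mk_monic r).
by rewrite ab /toRE rmorphD rmorphM.
Qed.

Lemma uE_mul_polE_eq0 a : (u * P a == 0) = (phi ^+ N %| a).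
Proof.
apply/eqP/idP => [|/dvdpP [q ->]]; last by rewrite polEM polE_phiN !mulr0.
rewrite /uE /polE /toRE -rmorphM => /(congr1 (@polyn _ _)) /=.
rewrite mk_monic_liftp_phiX // => mod0.
have := rdivp_eq (liftp_phiX_monic eps gam N) ((uR F)%:P * liftp a).
rewrite mod0 addr0; set q := rdivp _ _; have [q0 [q1 ->]] := liftp_dual_decomp q.
rewrite mulrDl -mulrA -!rmorphM -[LHS]add0r -[0 : {poly _}](map_poly0 (@cR F)).
by move=> /liftp_dual_inj [_ ->]; rewrite dvdp_mull.
Qed.

Lemma card_RE : #|RE eps gam N| = (#|F| ^ (4 * N))%N.
Proof.
rewrite card_qpoly mk_monic_liftp_phiX // size_liftp_phiX /=.
by rewrite card_qpoly mk_monic_Xn2 size_polyXn -expnM mulnA.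
Qed.

Lemma card_gen1_uE_phiX j : (j <= N)%N ->
  #|gen1 (u * ph ^+ j)| = (#|F| ^ (2 * (N - j)))%N.
Proof.
move=> jN; set M := (N - j)%N.
pose f (b : {poly_(2 * M) F}) := u * ph ^+ j * P b.
have -> : gen1 (u * ph ^+ j) = f @: setT.
  apply/setP => x; apply/gen1P/imsetP => [[r ->]|[b _ ->]]; last first.
    by exists (P b); rewrite mulrC.
  have [a [b ->]] := RE_decomp r.
  exists (npolyp (2 * M) (a %% phi ^+ M)) => //.
  rewrite /f npolypK; last by rewrite -ltnS -(size_phiX eps gam M) ltn_modp phiX_neq0.
  rewrite {1}(divp_eq a (phi ^+ M)) !polED polEM polEX.
  by rewrite (mul_u_phX_mod uE_sqr phiE_expN) // subnK.
rewrite card_imset ?cardsT ?card_npoly // => b b' /eqP.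
rewrite -subr_eq0 /f -mulrBr -polEB -mulrA -[ph]/(P phi) -polEX -polEM.
have phiN : phi ^+ N = phi ^+ j * phi ^+ M by rewrite -exprD subnKC.
rewrite uE_mul_polE_eq0 phiN dvdp_mul2l ?phiX_neq0 // => dvd.
apply: val_inj; apply/eqP; rewrite -subr_eq0; apply: contraTT dvd => neq0.
apply/negP => /(dvdp_leq neq0); apply/negP; rewrite -ltnNge size_phiX ltnS.
by rewrite (leq_trans (size_polyD _ _)) // geq_max size_polyN !size_npoly.
Qed.

Lemma uE_mul_uE_phiX k : u * (u * ph ^+ k) = 0.
Proof. by rewrite mulrA uE_sqr mul0r. Qed.

Section Generator.
Variables (i t : nat) (h : {poly F}).
Hypothesis i_le_N : (i <= N)%N.
Local Notation g := (gIII eps gam N i t h).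

Lemma uE_mul_gIII : u * g = u * ph ^+ i.
Proof. exact: (mulr_u_gen _ uE_sqr). Qed.

Lemma uE_phiX_in_gIII : u * ph ^+ i \in gen1 g.
Proof. by apply/gen1P; exists u; rewrite uE_mul_gIII. Qed.

Lemma uE_phiX_in_gIII_unit : isunit (P h) -> u * ph ^+ (N - i + t) \in gen1 g.
Proof.
move=> [v vh]; apply/gen1P; exists (v * ph ^+ (N - i)).
by rewrite /gIII (mul_phX_gen_unit uE_sqr phiE_expN).
Qed.

Lemma gIII_ann_in k (r : RE eps gam N) : (k <= i)%N ->
  (P h = 0 \/ (k <= N - i + t)%N) ->
  u * (r * g) = 0 -> r * g \in gen1 (u * ph ^+ k).
Proof.
move=> ki hk; have [a [b ->]] := RE_decomp r.
rewrite /gIII (mulr_u_mul_gen _ uE_sqr) -[ph]/(P phi) -polEX -polEM => /eqP.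
have phiN : phi ^+ N = phi ^+ i * phi ^+ (N - i) by rewrite -exprD subnKC.
rewrite uE_mul_polE_eq0 mulrC phiN dvdp_mul2l ?phiX_neq0 // => /dvdpP [a' ->].
rewrite polEM !polEX -[P phi]/ph (mul_phX_gen uE_sqr phiE_expN) //; apply/gen1P.
case: hk => [-> | kNit].
  by exists (ph ^+ (i - k) * P b); rewrite !mulr0 add0r (mulr_u_phX_factor _ _ _ ki).
exists (ph ^+ (N - i + t - k) * (P a' * P h) + ph ^+ (i - k) * P b).
by rewrite mulrDl -!mulr_u_phX_factor.
Qed.

Lemma card_gIII k : (k <= i)%N -> (P h = 0 \/ (k <= N - i + t)%N) ->
  u * ph ^+ k \in gen1 g ->
  #|gen1 g| = (#|F| ^ (2 * (N - i)) * #|F| ^ (2 * (N - k)))%N.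
Proof.
move=> ki hk kg; rewrite (card_mulr_split u); last exact: gen1_subr.
rewrite mulr_gen1 uE_mul_gIII (gen1_setI_ann (uE_mul_uE_phiX k)) //.
  by rewrite !card_gen1_uE_phiX // (leq_trans ki).
by move=> r; apply: gIII_ann_in.
Qed.

Lemma card_gIV w : (w <= i)%N -> (P h = 0 \/ (w <= N - i + t)%N) ->
  #|gen2 g (u * ph ^+ w)| = (#|F| ^ (2 * (N - i)) * #|F| ^ (2 * (N - w)))%N.
Proof.
move=> wi hw; rewrite (card_mulr_split u); last exact: gen2_subr.
rewrite mulr_gen2 ?uE_mul_uE_phiX // uE_mul_gIII.
rewrite (gen2_setI_ann (uE_mul_uE_phiX w)); last by move=> r; apply: gIII_ann_in.
by rewrite !card_gen1_uE_phiX // (leq_trans wi).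
Qed.

End Generator.
End QuotientRing.

Unset Implicit Arguments.
Theorem theorem3p14 (p m s : nat) (F : finFieldType) (alpha alpha0 gam eps : F) :
  prime p -> odd p -> (0 < m)%N -> (0 < s)%N ->
  #|F| = (p ^ m)%N -> (p ^ m %% 4 = 3)%N ->
  alpha != 0 -> (forall b : F, b ^+ 2 != alpha) ->
  alpha0 ^+ (p ^ s) = alpha -> gam ^+ 4 + 4%:R * alpha0 = 0 ->
  (eps = 1 \/ eps = -1) ->
  let N := (p ^ s)%N in
  forall I : {set RE eps gam N},
    (I = [set 0] -> #|I| = 1%N) /\
    (I = [set: RE eps gam N] -> #|I| = (p ^ (4 * m * N))%N) /\
    (forall i : nat, (i <= N - 1)%N ->
       I = gen1 (uE eps gam N * phiE eps gam N ^+ i) ->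
       #|I| = (p ^ (2 * m * (N - i)))%N) /\
    (forall (i t : nat) (h : {poly F}),
       (1 <= i <= N - 1)%N -> (t < i)%N -> hform eps gam N (i - t) h ->
       I = gen1 (gIII eps gam N i t h) ->
       ((h = 0 \/ (isunit (polE eps gam N h) /\ (2 * i <= N + t)%N)) ->
          #|I| = (p ^ (4 * m * (N - i)))%N) /\
       ((isunit (polE eps gam N h) /\ (N + t < 2 * i)%N) ->
          #|I| = (p ^ (2 * m * (N - t)))%N)) /\
    (forall (i t w : nat) (h : {poly F}),
       (1 <= i <= N - 1)%N -> (t < w)%N -> hform eps gam N (w - t) h ->
       (forall U : nat,
          uE eps gam N * phiE eps gam N ^+ U \in gen1 (gIII eps gam N i t h) ->
          (w < U)%N) ->
       I = gen2 (gIII eps gam N i t h) (uE eps gam N * phiE eps gam N ^+ w) ->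
       #|I| = (p ^ (2 * m * (2 * N - i - w)))%N).
Proof.
move=> p_prime _ _ _ cardF _ _ _ _ _ _ N I.
have N_gt0 : (0 < N)%N by rewrite expn_gt0 prime_gt0.
have cardFX n : (#|F| ^ n = p ^ (m * n))%N by rewrite cardF expnM.
split; first by move=> ->; exact: cards1.
split.
  by move=> ->; rewrite cardsT card_RE // cardFX; congr expn; lia.
split.
  move=> i iN ->; rewrite card_gen1_uE_phiX //; last lia.
  by rewrite cardFX; congr expn; lia.
split.
  move=> i t h /andP [_ iN] _ _ ->; have i_le_N : (i <= N)%N by lia.
  split=> [hcase | [hu Nt_lt]].
    rewrite (card_gIII N_gt0 i_le_N (leqnn i)); last exact: uE_phiX_in_gIII.
      by rewrite -expnD cardFX; congr expn; lia.
    by case: hcase => [-> | [_ ?]]; [left; rewrite polE0 | right; lia].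
  have k_le_i : (N - i + t <= i)%N by lia.
  rewrite (card_gIII N_gt0 i_le_N k_le_i); [|by right | exact: uE_phiX_in_gIII_unit].
  by rewrite -expnD cardFX; congr expn; lia.
move=> i t w h /andP [_ iN] _ hf hU ->; have i_le_N : (i <= N)%N by lia.
have w_lt_i : (w < i)%N by apply: hU; exact: uE_phiX_in_gIII.
rewrite (card_gIV N_gt0 i_le_N (ltnW w_lt_i)).
  by rewrite -expnD cardFX; congr expn; lia.
case: hf => [-> | [_ hu]]; first by left; rewrite polE0.
by right; apply/ltnW/hU; exact: uE_phiX_in_gIII_unit.
Qed.
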